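(* Let $\mathcal{H}=(V,E)$ be a hypergraph, and consider the mixed integer linear program with variables $w_R\in[0,1]$ for each $R\in E$ and $t_x\in\{0,1\}$ for each $x\in V$: maximize $\sum_{R\in E}w_R$ subject to (a) for all $x\in V$: $\sum_{R\in E: x\in R}w_R\le t_x+(1-t_x)L$; (b) for all $R\in E$: $w_R\le\sum_{x\in R}t_x$; (c) for all $U,W\in E$ and all $y\in U\setminus W$: $w_W\le 1+\sum_{x\in W\setminus U}t_x-t_y$. Fix values of the $t$ variables and let $S=\{x\in V: t_x=1\}$. Then the optimal objective value of the program (optimizing over $w$ with $t$ fixed) is $\tau^*(\mathsf{red}(\mathcal{H}[S]))$.
   Context: $L$ is a fixed large number (large enough that constraint (a) is vacuous when $t_x=0$, e.g. $L\ge|E|$). $\mathcal{H}[S]$ is the hypergraph with vertex set $S$ and edges $\{S\cap e: e\in E, S\cap e\ne\emptyset\}$; $\mathsf{red}$ removes every edge $e$ contained in another edge $e'\ne e$. $\tau^*$ is the value of a maximum fractional edge packing (equivalently, minimum fractional vertex cover); the empty hypergraph has $\tau^*=0$. *)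

From HB Require Import structures.
From mathcomp Require Import all_boot all_order all_algebra.
From mathcomp Require Import reals.
Set Implicit Arguments. Unset Strict Implicit. Unset Printing Implicit Defensive.
Import Order.TTheory GRing.Theory Num.Theory.
Local Open Scope ring_scope.

Section Defs.
Variables (R : realType) (V : finType).

Definition induced (E : {set {set V}}) (S : {set V}) : {set {set V}} :=
  [set S :&: e | e in E & S :&: e != set0].

Definition red (F : {set {set V}}) : {set {set V}} :=
  [set e in F | [forall e' in F, ~~ ((e \subset e') && (e' != e))]].

Definition is_frac_packing (X : {set V}) (F : {set {set V}}) (y : {set V} -> R) :=
  (forall e, e \in F -> 0 <= y e) /\
  (forall x, x \in X -> \sum_(e in F | x \in e) y e <= 1).

Definition is_tau_star (X : {set V}) (F : {set {set V}}) (v : R) :=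
  (exists y, is_frac_packing X F y /\ \sum_(e in F) y e = v) /\
  (forall y, is_frac_packing X F y -> \sum_(e in F) y e <= v).

Definition milp_feasible (E : {set {set V}}) (L : R) (t : V -> R)
    (w : {set V} -> R) :=
  [/\ (forall Re, Re \in E -> 0 <= w Re <= 1),
      (forall x, \sum_(Re in E | x \in Re) w Re <= t x + (1 - t x) * L),
      (forall Re, Re \in E -> w Re <= \sum_(x in Re) t x) &
      (forall U W y, U \in E -> W \in E -> y \in U :\: W ->
         w W <= 1 + \sum_(x in W :\: U) t x - t y)].

Definition milp_opt (E : {set {set V}}) (L : R) (t : V -> R) (v : R) :=
  (exists w, milp_feasible E L t w /\ \sum_(Re in E) w Re = v) /\
  (forall w, milp_feasible E L t w -> \sum_(Re in E) w Re <= v).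

End Defs.

(* With t fixed, a feasible w vanishes on every edge e whose trace S :&: e is
   not an edge of red(H[S]): constraint (b) kills e when the trace is empty,
   and constraint (c), applied with an edge U whose trace strictly contains
   S :&: e and a vertex of S in U but not in e, kills it otherwise.  Summing w
   over the edges with a given trace thus maps feasible points to fractional
   packings of red(H[S]) of the same value.  Conversely, a packing y is
   realised by putting y f on one chosen edge with trace f; it satisfies (c)
   because the trace of such an edge is maximal, hence not contained in the
   trace of another edge.  Both optima exist because the fractional packings
   supported on the edges form a compact set. *)

From HB Require Import structures.
From mathcomp Require Import all_boot all_order all_algebra.
From mathcomp Require Import reals.
Set Implicit Arguments. Unset Strict Implicit. Unset Printing Implicit Defensive.
Import Order.TTheory GRing.Theory Num.Theory.
Local Open Scope ring_scope.

Section InducedReduced.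
Variables (V : finType) (E : {set {set V}}) (S : {set V}).

Lemma mem_induced e : e \in E -> S :&: e != set0 -> S :&: e \in induced E S.
Proof. by move=> eE Se_neq0; apply/imsetP; exists e; rewrite // inE eE. Qed.

Lemma inducedP f :
  reflect (exists2 e, e \in E & S :&: e != set0 /\ f = S :&: e)
          (f \in induced E S).
Proof.
apply: (iffP imsetP) => [[e]|[e eE [Se_neq0 ->]]]; last by exists e; rewrite // inE eE.
by rewrite inE => /andP[eE Se_neq0] ->; exists e.
Qed.

Lemma induced_meets f : f \in induced E S -> exists2 x, x \in S & x \in f.
Proof. by case/inducedP => e _ [/set0Pn[x /[dup] /setIP[Sx _]] Sex ->]; exists x. Qed.

Lemma red_mem (F : {set {set V}}) f : f \in red F -> f \in F.
Proof. by rewrite inE => /andP[]. Qed.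

Lemma red_maximal (F : {set {set V}}) f g :
  f \in red F -> g \in F -> f \subset g -> g = f.
Proof.
rewrite inE => /andP[_ /forall_inP f_max] gF fg.
by apply/eqP/negPn; have := f_max g gF; rewrite fg.
Qed.

Lemma not_red_proper (F : {set {set V}}) f :
  f \in F -> f \notin red F -> exists2 g, g \in F & f \proper g.
Proof.
move=> fF; rewrite inE fF /= => /forall_inPn[g gF].
by rewrite negbK => /andP[fg gf]; exists g; rewrite // properEneq eq_sym gf.
Qed.

End InducedReduced.

Lemma frac_packing_le1 (R : realType) (V : finType) (X : {set V})
    (F : {set {set V}}) (y : {set V} -> R) f :
  is_frac_packing X F y -> f \in F -> (exists2 x, x \in X & x \in f) -> y f <= 1.
Proof.
move=> [y_ge0 y_le1] fF [x xX xf].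
apply: le_trans (y_le1 x xX); rewrite (bigD1 f) ?fF ?xf //= lerDl.
by apply: sumr_ge0 => e /andP[/andP[eF _] _]; exact: y_ge0.
Qed.

Section MilpReduction.
Variables (R : realType) (V : finType) (E : {set {set V}}) (L : R) (t : V -> R).
Hypothesis t01 : forall x, t x = 0 \/ t x = 1.
Local Notation S := [set x | t x == 1].
Local Notation F := (red (induced E S)).
Local Notation feasible := (milp_feasible E L t).

Lemma t_S x : x \in S -> t x = 1.
Proof. by rewrite inE => /eqP. Qed.

Lemma t_notS x : x \notin S -> t x = 0.
Proof. by rewrite inE; case: (t01 x) => ->; rewrite ?eqxx. Qed.

Lemma t_ge0 x : 0 <= t x.
Proof. by case: (t01 x) => ->. Qed.

Lemma sum_t_ge0 (A : {set V}) : 0 <= \sum_(x in A) t x.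
Proof. by apply: sumr_ge0 => x _; exact: t_ge0. Qed.

Lemma sum_t_ge1 (A : {set V}) x : x \in A -> x \in S -> 1 <= \sum_(z in A) t z.
Proof.
move=> xA xS; rewrite (bigD1 x) //= t_S // lerDl.
by apply: sumr_ge0 => z _; exact: t_ge0.
Qed.

Lemma sum_t_eq0 (A : {set V}) : {in A, forall x, x \notin S} -> \sum_(x in A) t x = 0.
Proof. by move=> A_notS; apply: big1 => x /A_notS /t_notS. Qed.

Lemma feasible_off_red w e : feasible w -> e \in E -> S :&: e \notin F -> w e = 0.
Proof.
case=> w01 _ w_le_t w_exchange eE Se_notF; apply/eqP; rewrite eq_le.
have /andP[-> _] := w01 e eE; rewrite andbT.
have [Se0|Se_neq0] := eqVneq (S :&: e) set0.
  rewrite -(@sum_t_eq0 e) ?w_le_t // => x ex; apply/negP => Sx.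
  by have := in_set0 x; rewrite -Se0 inE Sx ex.
have [g /inducedP[U UE [_ ->]] /properP[Se_SU [y SUy Sey]]] :=
  not_red_proper (mem_induced eE Se_neq0) Se_notF.
have [Sy Uy] := setIP SUy.
have yUe : y \in U :\: e by rewrite inE Uy andbT; apply: contra Sey => ey; apply/setIP.
have e_out_U : {in e :\: U, forall x, x \notin S}.
  move=> x /setDP[ex xU]; apply: contraNN xU => Sx.
  have : x \in S :&: e by rewrite in_setI Sx ex.
  by move/(subsetP Se_SU)/setIP => [].
by have := w_exchange U e y UE eE yUe; rewrite sum_t_eq0 // t_S // addr0 subrr.
Qed.

Lemma sum_over_traces (h : {set V} -> R) (P : pred {set V}) :
  \sum_(f in F | P f) \sum_(e in E | S :&: e == f) h e =
  \sum_(e in E | P (S :&: e) && (S :&: e \in F)) h e.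
Proof.
rewrite [RHS](partition_big (fun e => S :&: e) (fun f => (f \in F) && P f)) /=.
  apply: eq_bigr => f /andP[fF Pf]; apply: eq_bigl => e.
  by case: eqP => [->|_]; rewrite ?fF ?Pf ?andbT ?andbF.
by move=> e /andP[_ /andP[-> ->]].
Qed.

Definition push (w : {set V} -> R) (f : {set V}) := \sum_(e in E | S :&: e == f) w e.

Lemma push_frac_packing w : feasible w -> is_frac_packing S F (push w).
Proof.
case=> w01 w_load _ _; have w_ge0 e : e \in E -> 0 <= w e by move/w01/andP=> [].
split=> [f _|x Sx]; first by apply: sumr_ge0 => e /andP[/w_ge0].
rewrite (sum_over_traces w (fun f => x \in f)).
have := w_load x; rewrite t_S // subrr mul0r addr0; apply: le_trans.
rewrite [leRHS]big_mkcondr [leLHS]big_mkcondr /=; apply: ler_sum => e eE.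
case: ifP => [/andP[/setIP[_ ->] _]|_] //; case: ifP => // _; exact: w_ge0.
Qed.

Lemma sum_push w : feasible w -> \sum_(f in F) push w f = \sum_(e in E) w e.
Proof.
move=> w_feas; rewrite [RHS](bigID (fun e => S :&: e \in F)) /=.
rewrite [X in _ = _ + X]big1 ?addr0 => [|e /andP[eE /(feasible_off_red w_feas eE)] //].
by have := sum_over_traces w xpredT; rewrite big_condT /= => <-.
Qed.

Definition preim_edge (f : {set V}) := odflt set0 [pick e in E | S :&: e == f].

Lemma preim_edgeP f : f \in F -> preim_edge f \in E /\ S :&: preim_edge f = f.
Proof.
move=> /red_mem /inducedP[e eE [_ fe]]; rewrite /preim_edge.
by case: pickP => [e' /andP[-> /eqP]|/(_ e)] //=; rewrite eE fe eqxx.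
Qed.

Definition pull (y : {set V} -> R) (e : {set V}) :=
  if (S :&: e \in F) && (preim_edge (S :&: e) == e) then y (S :&: e) else 0.

Lemma pull_off_red y e : S :&: e \notin F -> pull y e = 0.
Proof. by rewrite /pull => /negbTE ->. Qed.

Lemma sum_pull_fiber y f : f \in F -> \sum_(e in E | S :&: e == f) pull y e = y f.
Proof.
move=> fF; have [fE Sf] := preim_edgeP fF.
rewrite (bigD1 (preim_edge f)) /=; last by rewrite fE Sf eqxx.
rewrite /pull Sf fF eqxx big1 ?addr0 // => e /andP[/andP[_ /eqP ->] ne].
by rewrite eq_sym (negbTE ne) andbF.
Qed.

Lemma sum_pull y (P : pred {set V}) :
  \sum_(e in E | P (S :&: e)) pull y e = \sum_(f in F | P f) y f.
Proof.
rewrite (bigID (fun e => S :&: e \in F)) /= [X in _ + X]big1 ?addr0; last first.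
  by move=> e /andP[_ /pull_off_red].
rewrite (eq_bigl _ _ (fun e => esym (andbA _ _ _))) -sum_over_traces.
by apply: eq_bigr => f /andP[fF _]; exact: sum_pull_fiber.
Qed.

Section PullPacking.
Variable y : {set V} -> R.
Hypothesis y_packing : is_frac_packing S F y.

Lemma pull_ge0_le1 e : 0 <= pull y e <= 1.
Proof.
rewrite /pull; case: ifP => [/andP[SeF _]|_]; last by rewrite lexx ler01.
have [y_ge0 _] := y_packing; rewrite y_ge0 //=.
exact: frac_packing_le1 y_packing SeF (induced_meets (red_mem SeF)).
Qed.

Lemma pull_le_sum_t e : pull y e <= \sum_(x in e) t x.
Proof.
case: (boolP (S :&: e \in F)) => [SeF|/pull_off_red ->]; last exact: sum_t_ge0.
have [x Sx /setIP[_ ex]] := induced_meets (red_mem SeF).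
have /andP[_ pull_le1] := pull_ge0_le1 e.
exact: le_trans pull_le1 (sum_t_ge1 ex Sx).
Qed.

Lemma pull_load x : #|E|%:R <= L ->
  \sum_(e in E | x \in e) pull y e <= t x + (1 - t x) * L.
Proof.
move=> E_le_L; case: (t01 x) => tx; rewrite tx ?subr0 ?mul1r ?add0r ?subrr ?mul0r ?addr0.
  apply: le_trans E_le_L; rewrite -sum1_card natr_sum [leLHS]big_mkcondr /=.
  by apply: ler_sum => e _; case: ifP => // _; have /andP[] := pull_ge0_le1 e.
have Sx : x \in S by rewrite inE tx.
have -> : \sum_(e in E | x \in e) pull y e = \sum_(e in E | x \in S :&: e) pull y e.
  by apply: eq_bigl => e; rewrite in_setI Sx.
by rewrite (sum_pull y (fun f => x \in f)); case: y_packing => _ /(_ x Sx).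
Qed.

Lemma pull_exchange U W z : U \in E -> z \in U :\: W ->
  pull y W <= 1 + \sum_(x in W :\: U) t x - t z.
Proof.
move=> UE /setDP[zU zW]; have /andP[_ pull_le1] := pull_ge0_le1 W.
case: (t01 z) => tz.
  by rewrite tz subr0; apply: le_trans pull_le1 _; rewrite lerDl sum_t_ge0.
have Sz : z \in S by rewrite inE tz.
rewrite tz addrC addKr.
have [/exists_inP[x xWU Sx]|/exists_inPn W_S_U] := boolP [exists x in W :\: U, x \in S].
  exact: le_trans pull_le1 (sum_t_ge1 xWU Sx).
suff -> : pull y W = 0 by exact: sum_t_ge0.
apply: pull_off_red; apply/negP => SWF.
have SU_ind : S :&: U \in induced E S.
  by apply: mem_induced => //; apply/set0Pn; exists z; rewrite in_setI Sz.
have SW_SU : S :&: W \subset S :&: U.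
  apply/subsetP => x /setIP[Sx xW]; rewrite in_setI Sx.
  by apply: contraTT Sx => xU; apply: W_S_U; rewrite in_setD xU xW.
have := red_maximal SWF SU_ind SW_SU => /setP/(_ z).
by rewrite !in_setI Sz zU (negbTE zW).
Qed.

End PullPacking.

Lemma pull_feasible y : #|E|%:R <= L -> is_frac_packing S F y -> feasible (pull y).
Proof.
move=> E_le_L y_packing; split=> [e _|x|e _|U W z UE _].
- exact: pull_ge0_le1.
- exact: pull_load.
- exact: pull_le_sum_t.
- exact: pull_exchange.
Qed.

End MilpReduction.

(* Imported only now: classical_sets rebinds [set0], used above for finite sets. *)
From mathcomp Require Import classical_sets topology normedtype derive.

Section PointwiseCompactness.
Variables (R : realType) (I : finType).
Local Notation T := {ptws I -> R^o}.
Local Open Scope classical_set_scope.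

Lemma continuous_sum_coord (P : pred I) :
  continuous (fun w : T => \sum_(i | P i) w i).
Proof. by apply: continuous_big => [|i _]; [exact: add_continuous|exact: proj_continuous]. Qed.

Lemma closed_sum_coord_le (P : pred I) (c : R) :
  closed [set w : T | \sum_(i | P i) w i <= c].
Proof.
apply: (@preimage_closed T R^o (fun w => \sum_(i | P i) w i) [set x | x <= c]).
  by move=> w _; exact: continuous_sum_coord.
exact: closed_le.
Qed.

Lemma closed_in_box_compact (a b : I -> R) (A : set T) :
  closed A -> A `<=` [set w | forall i, a i <= w i <= b i] -> compact A.
Proof.
move=> A_closed A_box.
have box_compact : compact [set w : T | forall i, (`[a i, b i] : set R^o) (w i)].
  have := @tychonoff I (fun=> R^o) (fun i => (`[a i, b i] : set R^o))
    (fun i => @segment_compact R (a i) (b i)).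
  exact.
apply: (subclosed_compact A_closed box_compact).
by move=> w /A_box w_box i; rewrite /= in_itv /= w_box.
Qed.

End PointwiseCompactness.

Section FractionalPackingExists.
Variables (R : realType) (V : finType) (X : {set V}) (F : {set {set V}}).
Hypothesis edges_meet_X : forall f, f \in F -> exists2 x, x \in X & x \in f.
Local Open Scope classical_set_scope.

Lemma tau_star_exists : exists v : R, is_tau_star X F v.
Proof.
(* Coordinates outside F are pinned to 0, so that P is compact. *)
pose box (w : {ptws {set V} -> R^o}) := forall e, 0 <= w e <= (e \in F)%:R.
pose P := [set w | box w /\ forall x, x \in X -> \sum_(e in F | x \in e) w e <= 1].
have P_closed : closed P.
  apply: closedI.
    have -> : box = \bigcap_(e in setT) (fun w => w e) @^-1` `[0, (e \in F)%:R].
      apply/seteqP; split=> w /= w_box e; first by rewrite /= in_itv /= w_box.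
      by have := w_box e I; rewrite /= in_itv.
    apply: closed_bigI => e _; apply: preimage_closed; last exact: interval_closed.
    by move=> w _; exact: proj_continuous.
  by apply: closed_bigI => x _; exact: closed_sum_coord_le.
have P_compact : compact P.
  apply: (@closed_in_box_compact R {set V} (fun=> 0) (fun e => (e \in F)%:R)).
    exact: P_closed.
  by move=> w [].
have P_nonempty : P !=set0.
  by exists (fun=> 0); split=> [e|x _]; rewrite ?big1 ?lexx ?ler0n ?ler01.
have [c /set_mem [c_box c_pack] c_max] := compact_EVT_max P_nonempty P_compact
  (continuous_subspaceT (@continuous_sum_coord R _ (fun e => e \in F))).
exists (\sum_(e in F) c e); split.
  by exists c; split=> //; split=> // e _; have /andP[] := c_box e.
move=> y /[dup] y_packing [y_ge0 y_le1]; pose yF e := if e \in F then y e else 0.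
have -> : \sum_(e in F) y e = \sum_(e in F) yF e by apply: eq_bigr => e; rewrite /yF => ->.
apply: c_max; apply/mem_set; split => [e|x xX].
  rewrite /yF; case: ifP => eF; last by rewrite lexx.
  by rewrite y_ge0 // (frac_packing_le1 y_packing) //; exact: edges_meet_X.
by apply: le_trans (y_le1 x xX); apply: ler_sum => e /andP[eF _]; rewrite /yF eF.
Qed.

End FractionalPackingExists.

Theorem lemmaA1 (R : realType) (V : finType) (E : {set {set V}}) (L : R)
    (t : V -> R) :
  (#|E|%:R <= L) ->
  (forall x, t x = 0 \/ t x = 1) ->
  let S := [set x | t x == 1] in
  exists v : R, milp_opt E L t v /\ is_tau_star S (red (induced E S)) v.
Proof.
move=> E_le_L t01 S.
have [v tau_v] := @tau_star_exists R V S (red (induced E S))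
  (fun f fF => induced_meets (red_mem fF)).
have [[y [y_packing y_v]] y_max] := tau_v.
exists v; split=> //; split.
  exists (pull E t y); split; first exact: pull_feasible.
  by have := sum_pull E t y xpredT; rewrite !big_condT y_v.
move=> w w_feasible; rewrite -(sum_push t01 w_feasible).
exact/y_max/(push_frac_packing w_feasible).
Qed.
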